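(* Let $n\ge 2$ and let $\eta_1,\dots,\eta_n$ be real numbers with $\eta_1+\cdots+\eta_n=0$ and $\eta_1^2+\cdots+\eta_n^2=1$. Let $r_{ij}\geq 0$ be nonnegative real numbers for $1\le i<j\le n$. Then \[ \sum_{i<j}(\eta_i-\eta_j)^2 r_{ij}\leq \sum_{i<j}r_{ij}+\max_{i<j} r_{ij}. \] *)

From mathcomp Require Import all_boot all_order all_algebra.
From mathcomp Require Import reals.
Set Implicit Arguments. Unset Strict Implicit. Unset Printing Implicit Defensive.

(* Symmetrise the weights (w_uv := r_ij for {u, v} = {i, j}) and let E be
   the energy sum_{u,v} w_uv (x_u - x_v)^2, twice the left-hand side.  For the
   Laplacian z_u := sum_v w_uv (x_u - x_v) we have 2 <x, z> = E, so
   Cauchy-Schwarz and |x| = 1 give E^2 <= 4 sum_u z_u^2.  Cauchy-Schwarz again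
   bounds z_u^2 by deg u * sum_v w_uv (x_u - x_v)^2, and after symmetrising in
   (u, v) everything reduces to deg u + deg v <= W + w_uv for u <> v, where
   2 W is the total weight: the edges at u or v are all edges, with uv counted
   twice.  Hence E^2 <= (2 W + 2 max w) E. *)
From mathcomp Require Import all_boot all_order all_algebra.
From mathcomp Require Import reals.
From mathcomp Require Import ring lra.
Set Implicit Arguments.
Unset Strict Implicit.
Unset Printing Implicit Defensive.

Import Order.TTheory GRing.Theory Num.Theory.
Local Open Scope ring_scope.

Section DoubleSums.
Variables (R : realFieldType) (n : nat).
Implicit Types (f : 'I_n -> 'I_n -> R) (a b c : 'I_n -> R).

Lemma sum2_symmetrize f :
  2 * \sum_u \sum_v f u v = \sum_u \sum_v (f u v + f v u).
Proof.
rewrite mulr_natl mulr2n [in X in _ + X]exchange_big -big_split /=.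
by apply: eq_bigr => u _; rewrite -big_split.
Qed.

Lemma sum_indicator_mul a (u : 'I_n) : \sum_v (v == u)%:R * a v = a u.
Proof.
rewrite (bigD1 u) //= eqxx mul1r big1 ?addr0 // => v /negbTE ->.
by rewrite mul0r.
Qed.

Lemma cauchy_schwarz_weighted a b c : (forall v, 0 <= a v) ->
  (\sum_v a v * b v * c v) ^+ 2 <=
  (\sum_v a v * b v ^+ 2) * (\sum_v a v * c v ^+ 2).
Proof.
move=> a_ge0; set T := \sum_v _; set P := \sum_v _; set Q := \sum_v _.
have lagrange : 2 * (P * Q - T ^+ 2) =
    \sum_v \sum_w a v * a w * (b v * c w - b w * c v) ^+ 2.
  have PQE : P * Q = \sum_v \sum_w a v * b v ^+ 2 * (a w * c w ^+ 2).
    by rewrite big_distrlr.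
  have TTE : T ^+ 2 = \sum_v \sum_w a v * b v * c v * (a w * b w * c w).
    by rewrite expr2 big_distrlr.
  rewrite mulrBr PQE TTE sum2_symmetrize mulr_sumr -sumrB.
  apply: eq_bigr => v _; rewrite mulr_sumr -sumrB.
  by apply: eq_bigr => w _; ring.
have : 0 <= 2 * (P * Q - T ^+ 2).
  rewrite lagrange; apply: sumr_ge0 => v _; apply: sumr_ge0 => w _.
  by rewrite mulr_ge0 ?sqr_ge0 ?mulr_ge0 ?a_ge0.
by rewrite pmulr_rge0 // subr_ge0.
Qed.

End DoubleSums.

Section WeightedGraph.
Variables (R : realFieldType) (n : nat) (w : 'I_n -> 'I_n -> R).
Hypothesis w_ge0 : forall u v, 0 <= w u v.
Hypothesis w_sym : forall u v, w u v = w v u.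
Hypothesis w_diag : forall u, w u u = 0.
Implicit Types (x : 'I_n -> R) (u v : 'I_n).

Definition total_weight := \sum_u \sum_v w u v.
Definition degree u := \sum_v w u v.
Definition local_energy x u := \sum_v w u v * (x u - x v) ^+ 2.
Definition energy x := \sum_u local_energy x u.
Definition laplacian x u := \sum_v w u v * (x u - x v).

Lemma sum_mul_laplacian x : 2 * \sum_u x u * laplacian x u = energy x.
Proof.
have -> : \sum_u x u * laplacian x u =
          \sum_u \sum_v w u v * (x u - x v) * x u.
  by apply: eq_bigr => u _; rewrite mulr_sumr; apply: eq_bigr => v _; ring.
rewrite sum2_symmetrize; apply: eq_bigr => u _; apply: eq_bigr => v _.
by rewrite [w v u]w_sym; ring.
Qed.

Lemma sqr_laplacian_le x u :
  laplacian x u ^+ 2 <= degree u * local_energy x u.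
Proof.
have := cauchy_schwarz_weighted (fun _ => 1) (fun v => x u - x v) (w_ge0 u).
by congr (_ ^+ 2 <= _ * _); apply: eq_bigr => v _; rewrite ?expr1n mulr1.
Qed.

Lemma degree_add_le u v : u != v ->
  2 * (degree u + degree v) <= total_weight + 2 * w u v.
Proof.
move=> neq_uv; pose p (a : 'I_n) : R := (a == u)%:R + (a == v)%:R.
have p01 a : p a = 0 \/ p a = 1.
  rewrite /p /=; have [->|_] := eqVneq a u.
    by rewrite (negbTE neq_uv) addr0; right.
  by have [_|_] := eqVneq a v; rewrite add0r; [right | left].
have sum_p f : \sum_a p a * f a = f u + f v.
  by under eq_bigr do rewrite mulrDl; rewrite big_split /= !sum_indicator_mul.
(* p is the indicator of {u, v}, and p a + p b <= 1 + p a * p b on 0/1 values *)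
have pw a b : w a b * (p a + p b) <= w a b + w a b * (p a * p b).
  rewrite -[X in _ <= X + _]mulr1 -mulrDr ler_wpM2l //.
  by case: (p01 a) => ->; case: (p01 b) => ->; lra.
have lhsE : \sum_a \sum_b w a b * (p a + p b) = 2 * (degree u + degree v).
  rewrite -(sum_p degree) /degree.
  under [in RHS]eq_bigr do rewrite mulr_sumr.
  rewrite sum2_symmetrize; apply: eq_bigr => a _; apply: eq_bigr => b _.
  by rewrite [w b a]w_sym; ring.
have rhsE : \sum_a \sum_b (w a b + w a b * (p a * p b)) =
            total_weight + 2 * w u v.
  under eq_bigr do rewrite big_split /=; rewrite big_split /=; congr (_ + _).
  transitivity (\sum_a p a * (w a u + w a v)).
    apply: eq_bigr => a _; rewrite -(sum_p (w a)) mulr_sumr.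
    by apply: eq_bigr => b _; ring.
  by rewrite (sum_p (fun a => w a u + w a v)) !w_diag [w v u]w_sym; ring.
by rewrite -lhsE -rhsE; apply: ler_sum => a _; apply: ler_sum => b _.
Qed.

Theorem energy_le_total_weight (M : R) x :
  (forall u v, w u v <= M) -> \sum_u x u ^+ 2 = 1 ->
  energy x <= total_weight + 2 * M.
Proof.
move=> w_leM x_unit; set E := energy x.
have E_ge0 : 0 <= E.
  by apply: sumr_ge0 => u _; apply: sumr_ge0 => v _; rewrite mulr_ge0 ?sqr_ge0.
have E2_le_lap : E ^+ 2 <= 4 * \sum_u laplacian x u ^+ 2.
  have := cauchy_schwarz_weighted x (laplacian x) (fun _ : 'I_n => ler01).
  under eq_bigr do rewrite mul1r.
  under [X in _ <= X * _]eq_bigr do rewrite mul1r.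
  under [X in _ <= _ * X]eq_bigr do rewrite mul1r.
  rewrite x_unit mul1r /E -sum_mul_laplacian; nra.
have lap_le_deg : 4 * \sum_u laplacian x u ^+ 2 <=
                  4 * \sum_u degree u * local_energy x u.
  by rewrite ler_pM2l // ler_sum // => u _; apply: sqr_laplacian_le.
have deg_le : 4 * \sum_u degree u * local_energy x u <=
              (total_weight + 2 * M) * E.
  have -> : \sum_u degree u * local_energy x u =
      \sum_u \sum_v degree u * (w u v * (x u - x v) ^+ 2).
    by apply: eq_bigr => u _; rewrite mulr_sumr.
  rewrite (_ : 4 = 2 * 2); last by ring.
  rewrite -mulrA sum2_symmetrize /E /energy !mulr_sumr.
  apply: ler_sum => u _; rewrite /local_energy !mulr_sumr.
  apply: ler_sum => v _.
  rewrite [w v u]w_sym -opprB sqrrN -mulrDl mulrA.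
  have [<-|neq_uv] := eqVneq u v; first by rewrite w_diag !(mul0r, mulr0).
  apply: ler_wpM2r; first by rewrite mulr_ge0 ?sqr_ge0.
  by have := degree_add_le neq_uv; have := w_leM u v; lra.
(* 'I_n is nonempty because x has norm 1 *)
have M_ge0 : 0 <= M.
  have [u0 _|no_index] := pickP (@predT 'I_n); first by rewrite -(w_diag u0).
  by move: x_unit; rewrite big_pred0 // => /eqP; rewrite eq_sym oner_eq0.
have T_ge0 : 0 <= total_weight.
  by apply: sumr_ge0 => u _; apply: sumr_ge0 => v _.
by have := le_trans E2_le_lap (le_trans lap_le_deg deg_le); nra.
Qed.

End WeightedGraph.

Section Symmetrization.
Variables (R : realFieldType) (n : nat) (r : 'I_n -> 'I_n -> R).

Definition sym_weight (i j : 'I_n) : R :=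
  if (i < j)%N then r i j else if (j < i)%N then r j i else 0.

Lemma sym_weightC i j : sym_weight i j = sym_weight j i.
Proof. by rewrite /sym_weight; case: ltngtP. Qed.

Lemma sym_weight_diag i : sym_weight i i = 0.
Proof. by rewrite /sym_weight ltnn. Qed.

Lemma sum_sym_weight (g : 'I_n -> 'I_n -> R) : (forall i j, g i j = g j i) ->
  \sum_(i < n) \sum_(j < n) sym_weight i j * g i j =
  2 * \sum_(i < n) \sum_(j < n | (i < j)%N) r i j * g i j.
Proof.
move=> gC; under [in RHS]eq_bigr do rewrite big_mkcond.
rewrite sum2_symmetrize; apply: eq_bigr => i _; apply: eq_bigr => j _.
by rewrite /sym_weight gC; case: ltngtP => _; rewrite ?(mul0r, addr0, add0r).
Qed.

Lemma energy_sym_weight (x : 'I_n -> R) :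
  energy sym_weight x =
  2 * \sum_(i < n) \sum_(j < n | (i < j)%N) (x i - x j) ^+ 2 * r i j.
Proof.
rewrite /energy /local_energy sum_sym_weight => [|i j]; last first.
  by rewrite -opprB sqrrN.
by congr (2 * _); apply: eq_bigr => i _; apply: eq_bigr => j _; rewrite mulrC.
Qed.

Lemma total_weight_sym_weight :
  total_weight sym_weight = 2 * \sum_(i < n) \sum_(j < n | (i < j)%N) r i j.
Proof.
have := @sum_sym_weight (fun _ _ => 1) (fun _ _ => erefl).
under eq_bigr do under eq_bigr do rewrite mulr1.
by under [in RHS]eq_bigr do under eq_bigr do rewrite mulr1.
Qed.

End Symmetrization.

Theorem mainTheorem4 (R : realType) (n : nat) (hn : (2 <= n)%N)
  (eta : 'I_n -> R) (r : 'I_n -> 'I_n -> R)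
  (hsum : \sum_(i < n) eta i = 0)
  (hsq : \sum_(i < n) eta i ^+ 2 = 1)
  (hr : forall i j : 'I_n, (i < j)%N -> 0 <= r i j) :
  \sum_(i < n) \sum_(j < n | (i < j)%N) (eta i - eta j) ^+ 2 * r i j
  <= \sum_(i < n) \sum_(j < n | (i < j)%N) r i j
     + \big[Num.max/0]_(i < n) \big[Num.max/0]_(j < n | (i < j)%N) r i j.
Proof.
set M := \big[Num.max/0]_(i < n) _.
have max_ge0 (F : 'I_n -> R) (P : pred 'I_n) :
    (forall i, P i -> 0 <= F i) -> 0 <= \big[Num.max/0]_(i | P i) F i.
  by move=> F_ge0; elim/big_ind: _ => // a b a0 b0; rewrite le_max a0.
have M_ge0 : 0 <= M.
  by apply: (max_ge0) => i _; apply: (max_ge0) => j; apply: hr.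
have r_leM (i j : 'I_n) : (i < j)%N -> r i j <= M.
  by move=> lt_ij; apply: le_trans (le_bigmax _ _ i); apply: le_bigmax_cond.
pose w := sym_weight r.
have w_ge0 (i j : 'I_n) : 0 <= w i j.
  by rewrite /w /sym_weight; case: ltngtP => // *; apply: hr.
have w_leM (i j : 'I_n) : w i j <= M.
  by rewrite /w /sym_weight; case: ltngtP => // *; apply: r_leM.
have := energy_le_total_weight w_ge0 (sym_weightC r) (sym_weight_diag r)
  w_leM hsq.
rewrite energy_sym_weight total_weight_sym_weight; lra.
Qed.
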